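(* Let $H$ be a Hilbert space and $L:H\to[0,\infty)$ of class $C^2$, and assume that for some $c>0$, $$|\nabla L(x)|\ge c\,\frac{\sqrt{L(x)}}{1+|x|}\quad\text{for all }x\in H.$$ Let $(x_t)_{t\ge0}$ solve $\dot x(t)=-\nabla L(x(t))$ with $x(0)=0$. Then there exists $x_\infty\in H$ with $|x_\infty|\le e^{\frac2c\sqrt{L(0)}}-1$, $L(x_\infty)=0$ and $\lim_{t\to\infty}x(t)=x_\infty$. *)

From mathcomp Require Import all_boot all_order all_algebra.
From mathcomp Require Import all_classical all_reals all_analysis.
Set Implicit Arguments. Unset Strict Implicit. Unset Printing Implicit Defensive.
Import Order.TTheory GRing.Theory Num.Theory.
Import numFieldNormedType.Exports.
Local Open Scope classical_set_scope.
Local Open Scope ring_scope.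

Definition is_hilbert_inner (R : realType) (H : completeNormedModType R)
    (inner : H -> H -> R) : Prop :=
  [/\ forall x y, inner x y = inner y x,
      forall a x y z, inner (a *: x + y) z = a * inner x z + inner y z
    & forall x, `|x| ^+ 2 = inner x x].

Definition is_gradient (R : realType) (H : completeNormedModType R)
    (inner : H -> H -> R) (L : H -> R) (g : H -> H) : Prop :=
  forall x, differentiable L x /\ forall v, 'd L x v = inner (g x) v.

Definition is_C2_with_gradient (R : realType) (H : completeNormedModType R)
    (inner : H -> H -> R) (L : H -> R) (g : H -> H) : Prop :=
  [/\ is_gradient inner L g,
      forall x, differentiable g x
    & forall x (eps : R), 0 < eps -> exists2 delta : R, 0 < delta &
        forall y, `|y - x| < delta ->
          forall v, `|'d g y v - 'd g x v| <= eps * `|v| ].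

Definition is_gradient_flow (R : realType) (H : completeNormedModType R)
    (g : H -> H) (x : R -> H) (x0 : H) : Prop :=
  [/\ x 0 = x0,
      x t @[t --> 0^'+] --> x 0
    & forall t : R, 0 < t -> is_derive t 1 x (- g (x t))].

From HB Require Import structures.
From mathcomp Require Import all_boot all_order all_algebra.
From mathcomp Require Import all_classical all_reals all_analysis.
From mathcomp Require Import ring lra.
Import Order.TTheory GRing.Theory Num.Theory.
Import numFieldNormedType.Exports.
Local Open Scope classical_set_scope.
Local Open Scope ring_scope.
Set Implicit Arguments. Unset Strict Implicit. Unset Printing Implicit Defensive.

(* Along the flow, d/dt L(x) = -|grad L(x)|^2.  Fix a time s, put p = x(s) and
   Phi(y) = (1 + |p| + |y - p|) exp((2/c) sqrt L(y)).  As |y| <= |p| + |y - p|, the hypothesis gives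
   c sqrt L(y) <= (1 + |p| + |y - p|) |grad L(y)|, which is exactly what makes Phi nonincreasing
   along the flow.  Hence |x(t) - x(s)| <= (1 + |x(s)|) (exp((2/c) sqrt L(x(s))) - 1), and with s = 0
   the trajectory stays in the ball of radius K - 1, K = exp((2/c) sqrt L(0)).  On that ball
   |grad L| >= (c/K) sqrt L, so L(x(t)) <= L(0) exp(-(c/K)^2 t); the displacement bound then makes
   x Cauchy at infinity, and its limit is a zero of L by continuity. *)

Lemma is_derive_diff_comp (R : realType) (V : normedModType R) (F : V -> R^o)
    (y : R -> V) (t : R) (v : V) :
  differentiable F (y t) -> is_derive t 1 y v ->
  is_derive t 1 (F \o y) ('d F (y t) v).
Proof.
move=> dF [dy <-].
have dy' : differentiable y t by apply/derivable1_diffP.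
have dFy : differentiable (F \o y) t by exact: differentiable_comp.
apply: DeriveDef; first exact/derivable1_diffP.
by rewrite !deriveE // diff_comp.
Qed.

Section InnerProduct.
Variables (R : realType) (H : completeNormedModType R) (inner : H -> H -> R).
Hypothesis hI : is_hilbert_inner inner.

Lemma innerC x y : inner x y = inner y x.
Proof. by case: hI. Qed.

Lemma inner_normr x : inner x x = `|x| ^+ 2.
Proof. by case: hI => _ _ ->. Qed.

Lemma innerDl x y z : inner (x + y) z = inner x z + inner y z.
Proof. by case: hI => _ hl _; rewrite -[x in LHS]scale1r hl mul1r. Qed.

Lemma inner0l z : inner 0 z = 0.
Proof. by have := innerDl 0 0 z; rewrite addr0; lra. Qed.

Lemma innerZl a x z : inner (a *: x) z = a * inner x z.
Proof. by case: hI => _ hl _; have := hl a x 0 z; rewrite !addr0 inner0l addr0. Qed.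

Lemma innerDr x y z : inner z (x + y) = inner z x + inner z y.
Proof. by rewrite !(innerC z) innerDl. Qed.

Lemma innerZr a x z : inner z (a *: x) = a * inner z x.
Proof. by rewrite !(innerC z) innerZl. Qed.

Lemma inner0r z : inner z 0 = 0.
Proof. by rewrite innerC inner0l. Qed.

Lemma innerNr x z : inner z (- x) = - inner z x.
Proof. by rewrite -scaleN1r innerZr mulN1r. Qed.

Lemma sqr_normrD u v : `|u + v| ^+ 2 = `|u| ^+ 2 + 2 * inner u v + `|v| ^+ 2.
Proof. by rewrite -!inner_normr !(innerDl, innerDr) (innerC v u); ring. Qed.

Lemma inner_le_norm a b : inner a b <= `|a| * `|b|.
Proof.
have [->|a0] := eqVneq a 0; first by rewrite inner0l normr0 mul0r.
have [->|b0] := eqVneq b 0; first by rewrite inner0r normr0 mulr0.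
have ab_gt0 : 0 < `|a| * `|b| by rewrite mulr_gt0 ?normr_gt0.
have : 0 <= `| `|b| *: a + (- `|a|) *: b| ^+ 2 by exact: sqr_ge0.
rewrite sqr_normrD innerZl innerZr !normrZ normrN !normr_id.
have -> : (`|b| * `|a|) ^+ 2 + 2 * (`|b| * (- `|a| * inner a b))
          + (`|a| * `|b|) ^+ 2 = 2 * (`|a| * `|b|) * (`|a| * `|b| - inner a b).
  by ring.
by rewrite pmulr_rge0 ?subr_ge0 // mulr_gt0.
Qed.

Lemma normr_inner_le a b : `|inner a b| <= `|a| * `|b|.
Proof.
rewrite ler_norml inner_le_norm andbT lerNl -innerNr.
by rewrite -[`|b|]normrN inner_le_norm.
Qed.

(* The remainder |p + h|^2 - |p|^2 - 2 <p, h> is exactly |h|^2. *)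
Lemma is_diff_sqr_normr p :
  is_diff p (fun z : H => `|z| ^+ 2 : R^o) (fun h => 2 * inner p h).
Proof.
pose d (h : H) : R^o := 2 * inner p h.
have d_linear : linear d by move=> a u w; rewrite /d innerDr innerZr /GRing.scale /=; ring.
pose dL : {linear H -> R^o} := HB.pack d (GRing.isLinear.Build _ _ _ _ _ d_linear).
have dL_cont : continuous dL.
  apply/linear_bounded_continuous/linear_boundedP; near=> r => h.
  rewrite /= /d normrM ger0_norm // (le_trans (ler_wpM2l _ (normr_inner_le p h))) //.
  by rewrite mulrA ler_wpM2r //; near: r; apply: nbhs_pinfty_ge.
have dL_expansion : (fun z => `|z| ^+ 2 : R^o) \o shift p = cst (`|p| ^+ 2) + dL +o_ 0 id.
  apply/eqaddoP => e e0; near=> h.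
  rewrite -[X in `|X|]/(`|h + p| ^+ 2 - (`|p| ^+ 2 + d h)).
  have -> : `|h + p| ^+ 2 - (`|p| ^+ 2 + d h) = `|h| ^+ 2 :> R.
    by rewrite [h + p]addrC sqr_normrD /d; ring.
  rewrite ger0_norm ?sqr_ge0 // expr2.
  by apply: ler_wpM2r => //; near: h; apply: nbhs0_le.
have dE : 'd (fun z => `|z| ^+ 2 : R^o) p = dL :> (H -> R^o) by exact: diff_unique.
by split; [apply/diff_locallyP; rewrite dE | rewrite dE].
Unshelve. all: by end_near. Qed.

Lemma is_derive_sqr_normr (y : R -> H) (t : R) (v : H) :
  is_derive t 1 y v -> is_derive t 1 (fun s => `|y s| ^+ 2 : R) (2 * inner (y t) v).
Proof.
move=> dy; have [dF dE] := is_diff_sqr_normr (y t).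
by have := is_derive_diff_comp dF dy; rewrite dE.
Qed.

End InnerProduct.

Section RealFunctions.
Variable R : realType.
Implicit Types (f : R -> R) (a b : R).

Lemma nonincreasing_is_derive f a b : a <= b ->
  {within `[a, b], continuous f} ->
  (forall t, a < t < b -> exists2 d, is_derive t 1 f d & d <= 0) ->
  f b <= f a.
Proof.
move=> ab fc fd; apply: (ler0_derive1_le_cc _ _ fc); rewrite ?in_itv /= ?lexx ?ab //.
- by move=> t /[!in_itv] /fd [d [df _] _].
- by move=> t /[!in_itv] /fd [d [_ <-] d_le0]; rewrite derive1E.
Qed.

(* Either Z has a first point e in [a, b], before which f decreases and after which it is frozen,
   or every point of Z in ]a, b[ is preceded by another one, so that f is locally constant there. *)
Lemma nonincreasing_is_derive_frozen f (Z : R -> Prop) a b : a <= b ->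
  {within `[a, b], continuous f} ->
  (forall t, a < t < b -> ~ Z t -> exists2 d, is_derive t 1 f d & d <= 0) ->
  (forall s t, a <= s <= t -> Z s -> f t = f s) ->
  f b <= f a.
Proof.
move=> ab fc fd frozen.
have [[e [/andP[ae eb] Ze first]]|nofirst] :=
  pselect (exists e, [/\ a <= e <= b, Z e & forall s, a <= s < e -> ~ Z s]).
  rewrite (frozen e b) ?ae ?eb //; apply: nonincreasing_is_derive ae _ _.
    by apply: continuous_subspaceW fc; apply: subset_itvl; rewrite bnd_simp.
  move=> t /andP[ta te]; apply: fd; first by rewrite ta (lt_le_trans te eb).
  by apply: first; rewrite te ltW.
apply: nonincreasing_is_derive ab fc _ => t /andP[ta tb].
have [Zt|nZt] := pselect (Z t); last by apply: fd; rewrite ?ta.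
have [s [/andP[sa st] Zs]] : exists s, a <= s < t /\ Z s.
  apply: contrapT => none; apply: nofirst; exists t; split => //.
    by rewrite !ltW.
  by move=> s sat Zs; apply: none; exists s.
exists 0 => //; apply: (near_eq_is_derive _ (is_derive_cst (f s) t 1)).
near=> u; rewrite /cst (frozen s u) // sa ltW //.
by near: u; exact: lt_nbhsr.
Unshelve. all: by end_near. Qed.

Lemma is_derive_sqrt_comp f t df : 0 < f t -> is_derive t 1 f df ->
  is_derive t 1 (fun s => Num.sqrt (f s)) (df / (2 * Num.sqrt (f t))).
Proof.
move=> ft_gt0 dft; apply: is_derive_eq (is_derive1_comp (is_derive1_sqrt ft_gt0) dft) _.
by rewrite mulrC.
Qed.

Lemma normr_le_sqrt_sqrD (r e : R) : 0 <= e -> `|r| <= Num.sqrt (r ^+ 2 + e).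
Proof. by move=> e_ge0; rewrite -sqrtr_sqr ler_sqrt ?lerDl // addr_ge0 ?sqr_ge0. Qed.

End RealFunctions.

Lemma cvg_pinfty_tail_bound (R : realType) (V : completeNormedModType R)
    (y : R -> V) (phi : R -> R) :
  phi t @[t --> +oo] --> 0 ->
  (\forall s \near +oo, forall t, s <= t -> `|y t - y s| <= phi s) ->
  cvg (y t @[t --> +oo]).
Proof.
move=> phi0 tail; apply/cauchy_cvgP/cauchy_exP => e e0.
have /filter_ex[s [tail_s phis_lt]] :
    \forall s \near +oo, (forall t, s <= t -> `|y t - y s| <= phi s) /\ phi s < e.
  by near=> s; split; [exact: (near tail s) | near: s; exact: cvgr_lt phi0 _ e0].
exists (y s); suff : \forall t \near +oo, ball (y s) e (y t) by [].
near=> t; rewrite -ball_normE /ball_ /= distrC.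
apply: le_lt_trans phis_lt; apply: tail_s.
by near: t; apply: nbhs_pinfty_ge; exact: num_real.
Unshelve. all: by end_near. Qed.

Section GradientFlow.
Variables (R : realType) (H : completeNormedModType R) (inner : H -> H -> R).
Variables (L : H -> R) (g : H -> H) (c : R) (x : R -> H).
Hypothesis hI : is_hilbert_inner inner.
Hypothesis L_ge0 : forall y, 0 <= L y.
Hypothesis L_grad : is_gradient inner L g.
Hypothesis c_gt0 : 0 < c.
Hypothesis grad_lower : forall y, c * Num.sqrt (L y) / (1 + `|y|) <= `|g y|.
Hypothesis x_flow : is_gradient_flow g x 0.

Lemma L_continuous : continuous L.
Proof. by move=> y; have [dL _] := L_grad y; exact: differentiable_continuous. Qed.

Lemma flow_is_derive (t : R) : 0 < t -> is_derive t 1 x (- g (x t)).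
Proof. by case: x_flow => _ _; apply. Qed.

Lemma flow_continuous (t : R) : 0 < t -> {for t, continuous x}.
Proof.
move=> t_gt0; have [dx _] := flow_is_derive t_gt0.
by apply: differentiable_continuous; exact/derivable1_diffP.
Qed.

Lemma flow_within_continuous (a b : R) : 0 <= a -> {within `[a, b], continuous x}.
Proof.
(* [continuous_within_itvP] needs a nondegenerate interval, hence [b']. *)
move=> a_ge0; pose b' := Num.max b (a + 1).
have ab' : a < b' by rewrite lt_max ltrDl ltr01 orbT.
apply: (@continuous_subspaceW _ _ _ `[a, b']).
  by apply: subset_itvl; rewrite bnd_simp le_max lexx.
apply/continuous_within_itvP => //; split.
- move=> t /[!in_itv] /= /andP[ta _]; apply: flow_continuous.
  exact: le_lt_trans ta.
- have [->|a_gt0] := eqVneq a 0; first by case: x_flow.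
  by apply: cvg_at_right_filter; apply: flow_continuous; rewrite lt_def a_gt0.
- by apply: cvg_at_left_filter; apply: flow_continuous; exact: le_lt_trans ab'.
Qed.

Lemma flow_comp_within_continuous (F : H -> R) (a b : R) : 0 <= a -> continuous F ->
  {within `[a, b], continuous (F \o x)}.
Proof.
move=> a_ge0 Fc; apply: within_continuous_comp; last exact: flow_within_continuous.
by move=> y _; exact: Fc.
Qed.

Lemma L_flow_is_derive (t : R) : 0 < t ->
  is_derive t 1 (L \o x) (- `|g (x t)| ^+ 2).
Proof.
move=> t_gt0; have [dL dLv] := L_grad (x t).
have := is_derive_diff_comp (F := L : H -> R^o) dL (flow_is_derive t_gt0).
by rewrite dLv (innerNr hI) (inner_normr hI).
Qed.

Lemma L_flow_nonincreasing (s t : R) : 0 <= s -> s <= t -> L (x t) <= L (x s).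
Proof.
move=> s_ge0 st; apply: (nonincreasing_is_derive (f := L \o x)) st _ _.
  exact: flow_comp_within_continuous s_ge0 L_continuous.
move=> u /andP[su _]; exists (- `|g (x u)| ^+ 2); last by rewrite oppr_le0 sqr_ge0.
by apply: L_flow_is_derive; exact: le_lt_trans su.
Qed.

Lemma sqr_dist_flow_is_derive (p : H) (t : R) : 0 < t ->
  is_derive t 1 (fun u => `|x u - p| ^+ 2) (2 * inner (x t - p) (- g (x t))).
Proof.
move=> t_gt0; apply: (is_derive_sqr_normr hI (y := fun u => x u - p)).
by apply: is_derive_eq (is_deriveB (flow_is_derive t_gt0) (is_derive_cst p t 1)) _; rewrite subr0.
Qed.

Lemma sqr_dist_continuous (p : H) : continuous (fun y => `|y - p| ^+ 2).
Proof.
move=> y; apply: (@continuous_comp _ _ _ (fun z => `|z - p|) (fun r : R => r ^+ 2)).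
  apply: (@continuous_comp _ _ _ (fun z => z - p) Num.norm); last exact: norm_continuous.
  exact: cvgB cvg_id (cvg_cst _).
exact: exprn_continuous.
Qed.

Lemma flow_stationary (s t : R) : 0 <= s -> s <= t -> L (x s) = 0 -> x t = x s.
Proof.
move=> s_ge0 st Lxs.
have L_after u : s <= u -> L (x u) = 0.
  by move=> su; apply/le_anti; rewrite L_ge0 andbT -Lxs L_flow_nonincreasing.
have g_after u : s < u -> g (x u) = 0.
  move=> su; have u_gt0 : 0 < u by exact: le_lt_trans su.
  have : is_derive u 1 (L \o x) 0.
    apply: near_eq_is_derive (is_derive_cst 0 u 1).
    by near=> v; rewrite /cst /= L_after //; apply: ltW; near: v; exact: lt_nbhsr.
  case=> _ dL0; case: (L_flow_is_derive u_gt0) => _; rewrite dL0 => /eqP.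
  by rewrite eq_sym oppr_eq0 sqrf_eq0 normr_eq0 => /eqP.
have : `|x t - x s| ^+ 2 <= `|x s - x s| ^+ 2.
  apply: (nonincreasing_is_derive (f := fun u => `|x u - x s| ^+ 2)) st _ _.
    exact: flow_comp_within_continuous s_ge0 (sqr_dist_continuous (p := x s)).
  move=> u /andP[su _]; exists (2 * inner (x u - x s) (- g (x u))).
    by apply: sqr_dist_flow_is_derive; exact: le_lt_trans su.
  by rewrite g_after // oppr0 (inner0r hI) mulr0.
rewrite subrr normr0 expr0n /= => le0.
by apply/eqP; rewrite -subr_eq0 -normr_eq0 -sqrf_eq0 eq_le le0 sqr_ge0.
Unshelve. all: by end_near. Qed.

(* The [+ e] keeps the distance term differentiable where [y = p]. *)
Definition lyapunov (p : H) (e : R) (y : H) : R :=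
  (1 + `|p| + Num.sqrt (`|y - p| ^+ 2 + e)) * expR (2 / c * Num.sqrt (L y)).

Lemma lyapunov_continuous p e : continuous (lyapunov p e).
Proof.
move=> y; rewrite /lyapunov; apply: cvgM.
  apply: cvgD (cvg_cst _) _.
  apply: (@continuous_comp _ _ _ (fun z => `|z - p| ^+ 2 + e) Num.sqrt).
    by apply: cvgD; [exact: sqr_dist_continuous | exact: cvg_cst].
  exact: sqrt_continuous.
apply: (@continuous_comp _ _ _ (fun z => 2 / c * Num.sqrt (L z)) expR).
  apply: cvgM (cvg_cst _) _.
  apply: (@continuous_comp _ _ _ L Num.sqrt); [exact: L_continuous | exact: sqrt_continuous].
exact: continuous_expR.
Qed.

Lemma grad_lower_mul y : c * Num.sqrt (L y) <= (1 + `|y|) * `|g y|.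
Proof.
have y_gt0 : 0 < 1 + `|y| by rewrite ltr_pwDl.
by rewrite [_ * `|g y|]mulrC -ler_pdivrMr // grad_lower.
Qed.

Lemma lyapunov_flow_derive_nonpos p e t : 0 < e -> 0 < t -> 0 < L (x t) ->
  exists2 d, is_derive t 1 (lyapunov p e \o x) d & d <= 0.
Proof.
move=> e_gt0 t_gt0 L_gt0.
pose S v := Num.sqrt (`|x v - p| ^+ 2 + e).
pose E v := expR (2 / c * Num.sqrt (L (x v))).
set u := `|g (x t)|; set q := Num.sqrt (L (x t)); set i := inner (x t - p) (- g (x t)).
have N_gt0 : 0 < `|x t - p| ^+ 2 + e by rewrite ltr_wpDl ?sqr_ge0.
have dS : is_derive t 1 S (2 * i / (2 * S t)).
  apply: (is_derive_sqrt_comp (f := fun v => `|x v - p| ^+ 2 + e)) N_gt0 _.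
  apply: is_derive_eq (is_deriveD (sqr_dist_flow_is_derive p t_gt0) (is_derive_cst e t 1)) _.
  by rewrite addr0.
have dE : is_derive t 1 E (E t * (2 / c * (- u ^+ 2 / (2 * q)))).
  exact: is_derive1_comp (is_derive_expR _)
    (is_deriveZ (2 / c) (is_derive_sqrt_comp L_gt0 (L_flow_is_derive t_gt0))).
have := is_deriveM (is_deriveD (is_derive_cst (1 + `|p|) t 1) dS) dE.
set d := (X in is_derive _ _ _ X) => dPhi; exists d => //.
have S_gt0 : 0 < S t by rewrite sqrtr_gt0.
have q_gt0 : 0 < q by rewrite sqrtr_gt0.
have dist_le : `|x t - p| <= S t.
  by rewrite -[leLHS]normr_id normr_le_sqrt_sqrD ?ltW.
have i_le : i <= S t * u.
  apply: le_trans (inner_le_norm hI _ _) _; rewrite normrN.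
  exact: ler_wpM2r.
have cq_le : c * q <= (1 + `|p| + S t) * u.
  apply: le_trans (grad_lower_mul _) _; apply: ler_wpM2r => //.
  have : `|x t| <= `|p| + `|x t - p|.
    by rewrite -[x t in leLHS](subrK p) addrC ler_normD.
  lra.
have -> : d = E t * (i / S t - (1 + `|p| + S t) * u ^+ 2 / (c * q)) :> R.
  rewrite -[d]/((1 + `|p| + S t) * (E t * (2 / c * (- u ^+ 2 / (2 * q))))
                + E t * (0 + 2 * i / (2 * S t))).
  by field; rewrite !gt_eqF.
rewrite pmulr_rle0 ?expR_gt0 // subr_le0; apply: (@le_trans _ _ u).
  by rewrite ler_pdivrMr // mulrC.
rewrite ler_pdivlMr ?mulr_gt0 //.
have := ler_wpM2r (normr_ge0 (g (x t))) cq_le; rewrite -/u expr2; lra.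
Qed.

(* [sqrt L] is not differentiable where [L] vanishes, but from then on the flow is stationary. *)
Lemma lyapunov_flow_nonincreasing p e s t : 0 < e -> 0 <= s -> s <= t ->
  lyapunov p e (x t) <= lyapunov p e (x s).
Proof.
move=> e_gt0 s_ge0 st.
apply: (nonincreasing_is_derive_frozen (f := lyapunov p e \o x) (Z := fun u => L (x u) = 0)) st _ _ _.
- exact: flow_comp_within_continuous s_ge0 (@lyapunov_continuous p e).
- move=> u /andP[su _] Lu_neq0; apply: lyapunov_flow_derive_nonpos => //.
    exact: le_lt_trans su.
  by rewrite lt_def L_ge0 andbT; apply/eqP.
- move=> v w /andP[sv vw] Lv /=.
  by rewrite (flow_stationary _ vw Lv) // (le_trans s_ge0).
Qed.

Lemma flow_displacement s t : 0 <= s -> s <= t ->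
  1 + `|x s| + `|x t - x s| <= (1 + `|x s|) * expR (2 / c * Num.sqrt (L (x s))).
Proof.
move=> s_ge0 st; set K := expR _; have K_gt0 : 0 < K by exact: expR_gt0.
apply/ler_addgt0Pr => d d_gt0; have dK_ge0 : 0 <= d / K by rewrite divr_ge0 ?ltW.
have := lyapunov_flow_nonincreasing (x s) (exprn_gt0 2 (divr_gt0 d_gt0 K_gt0)) s_ge0 st.
rewrite /lyapunov subrr normr0 expr0n add0r sqrtr_sqr ger0_norm // -/K.
have E_ge1 : 1 <= expR (2 / c * Num.sqrt (L (x t))).
  by rewrite -expR0 ler_expR mulr_ge0 ?sqrtr_ge0 // divr_ge0 // ltW.
have := normr_le_sqrt_sqrD `|x t - x s| (sqr_ge0 (d / K)); rewrite normr_id.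
set r := Num.sqrt _ => dist_le Lyap.
apply: le_trans (_ : (1 + `|x s| + r) * expR (2 / c * Num.sqrt (L (x t))) <= _).
  apply: le_trans (_ : 1 + `|x s| + r <= _); first by rewrite lerD2l.
  by rewrite ler_peMr // !addr_ge0 ?sqrtr_ge0.
by apply: le_trans Lyap _; rewrite mulrDl divfK ?gt_eqF.
Qed.

Lemma flow_norm_le t : 0 <= t -> 1 + `|x t| <= expR (2 / c * Num.sqrt (L 0)).
Proof.
case: x_flow => x0 _ _ t_ge0; have := flow_displacement (lexx 0) t_ge0.
by rewrite x0 normr0 addr0 subr0 mul1r.
Qed.

Lemma flow_tail_le s t : 0 <= s -> s <= t ->
  `|x t - x s| <= expR (2 / c * Num.sqrt (L 0)) * (expR (2 / c * Num.sqrt (L (x s))) - 1).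
Proof.
move=> s_ge0 st; have E_ge1 : 1 <= expR (2 / c * Num.sqrt (L (x s))).
  by rewrite -expR0 ler_expR mulr_ge0 ?sqrtr_ge0 // divr_ge0 // ltW.
apply: le_trans (_ : (1 + `|x s|) * (expR (2 / c * Num.sqrt (L (x s))) - 1) <= _).
  by have := flow_displacement s_ge0 st; rewrite mulrBr mulr1; lra.
by apply: ler_wpM2r; [rewrite subr_ge0 | exact: flow_norm_le].
Qed.

Lemma L_flow_exp_decay t : 0 <= t ->
  L (x t) <= L 0 * expR (- ((c / expR (2 / c * Num.sqrt (L 0))) ^+ 2 * t)).
Proof.
move=> t_ge0; set K := expR (2 / c * _); set k := (c / K) ^+ 2.
pose f u := L (x u) * expR (k * u).
have : f t <= f 0.
  apply: nonincreasing_is_derive t_ge0 _ _.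
    have Lc := flow_comp_within_continuous (b := t) (lexx 0) L_continuous.
    move=> u; apply: (cvgM (Lc u)); apply: continuous_subspaceT => {}u.
    apply: (@continuous_comp _ _ _ (fun v => k * v) expR); last exact: continuous_expR.
    exact: cvgM (cvg_cst _) cvg_id.
  move=> u /andP[u_gt0 _].
  have dE : is_derive u 1 (fun v => expR (k * v)) (expR (k * u) * (k * 1)).
    exact: is_derive1_comp (is_derive_expR _) (is_deriveZ k (is_derive_id u 1)).
  have := is_deriveM (L_flow_is_derive u_gt0) dE.
  set d := (X in is_derive _ _ _ X) => df; exists d => //.
  have -> : d = expR (k * u) * (k * L (x u) - `|g (x u)| ^+ 2) :> R.
    by rewrite /d /GRing.scale /=; ring.
  rewrite pmulr_rle0 ?expR_gt0 // subr_le0.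
  have : c * Num.sqrt (L (x u)) <= K * `|g (x u)|.
    apply: le_trans (grad_lower_mul _) _; apply: ler_wpM2r => //.
    exact: flow_norm_le (ltW u_gt0).
  rewrite -ler_pdivrMl ?expR_gt0 // => cL_le.
  have cL_ge0 : 0 <= K^-1 * (c * Num.sqrt (L (x u))).
    by rewrite !mulr_ge0 ?sqrtr_ge0 ?invr_ge0 ?ltW ?expR_gt0.
  have -> : k * L (x u) = (K^-1 * (c * Num.sqrt (L (x u)))) ^+ 2.
    by rewrite /k !exprMn sqr_sqrtr //; ring.
  by rewrite !expr2; exact: ler_pM.
case: x_flow => x0 _ _; rewrite /f mulr0 expR0 mulr1 x0 => decay.
by rewrite expRN ler_pdivlMr ?expR_gt0.
Qed.

Lemma L_flow_cvg0 : L (x t) @[t --> +oo] --> 0.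
Proof.
set k := (c / expR (2 / c * Num.sqrt (L 0))) ^+ 2.
have k_gt0 : 0 < k by rewrite exprn_gt0 // divr_gt0 // expR_gt0.
have kt_oo : k * t @[t --> +oo] --> +oo.
  by apply/cvgryPge => A; near=> t; rewrite -ler_pdivrMl.
have decay0 : L 0 * expR (- (k * t)) @[t --> +oo] --> 0.
  by have := cvgM (cvg_cst (L 0)) (cvg_comp _ _ kt_oo (@cvgr_expR R)); rewrite mulr0; apply.
apply: (squeeze_cvgr _ (cvg_cst 0) decay0); near=> t.
by rewrite L_ge0 L_flow_exp_decay.
Unshelve. all: by end_near. Qed.

Lemma flow_cvg : cvg (x t @[t --> +oo]).
Proof.
set K := expR (2 / c * Num.sqrt (L 0)).
apply: (cvg_pinfty_tail_bound (phi := fun s => K * (expR (2 / c * Num.sqrt (L (x s))) - 1))).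
  have phi_cont : {for 0, continuous (fun r => K * (expR (2 / c * Num.sqrt r) - 1))}.
    apply: cvgM; first exact: cvg_cst.
    apply: cvgB; last exact: cvg_cst.
    apply: (@continuous_comp _ _ _ (fun r => 2 / c * Num.sqrt r) expR); last exact: continuous_expR.
    by apply: cvgM; [exact: cvg_cst | exact: sqrt_continuous].
  by have := cvg_comp _ _ L_flow_cvg0 phi_cont; rewrite sqrtr0 mulr0 expR0 subrr mulr0.
near=> s => t st; apply: flow_tail_le st.
by near: s; apply: nbhs_pinfty_ge; exact: num_real.
Unshelve. all: by end_near. Qed.

End GradientFlow.

Unset Implicit Arguments. Set Strict Implicit. Set Printing Implicit Defensive.

Theorem corollary2p5 (R : realType) (H : completeNormedModType R)
  (inner : H -> H -> R) (L : H -> R) (gradL : H -> H) (c : R) (x : R -> H) :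
  is_hilbert_inner inner ->
  (forall y, 0 <= L y) ->
  is_C2_with_gradient inner L gradL ->
  0 < c ->
  (forall y, `|gradL y| >= c * Num.sqrt (L y) / (1 + `|y|)) ->
  is_gradient_flow gradL x 0 ->
  exists xinf : H,
    [/\ `|xinf| <= expR (2 / c * Num.sqrt (L 0)) - 1,
        L xinf = 0
      & x t @[t --> +oo] --> xinf].
Proof.
move=> hI L_ge0 [L_grad _ _] c_gt0 grad_lower x_flow.
have x_cvg := flow_cvg hI L_ge0 L_grad c_gt0 grad_lower x_flow.
exists (lim (x t @[t --> +oo])); split => //.
- apply: (cvgr_to_le (cvg_norm x_cvg)); near=> t.
  suff : 1 + `|x t| <= expR (2 / c * Num.sqrt (L 0)) by lra.
  apply: (flow_norm_le hI L_ge0 L_grad c_gt0 grad_lower x_flow).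
  by near: t; apply: nbhs_pinfty_ge; exact: num_real.
- have L_cvg : L (x t) @[t --> +oo] --> L (lim (x t @[t --> +oo])).
    by apply: cvg_comp x_cvg _; exact: L_continuous L_grad _.
  exact: cvg_unique L_cvg (L_flow_cvg0 hI L_ge0 L_grad c_gt0 grad_lower x_flow).
Unshelve. all: by end_near. Qed.
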